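(* Let $J,\mathbf{J},\mathbf{S},\mathbf{U},\mathbf{V},\mathbf{K}$ and $\mathbf{\Xi}$ be as in one of the three cases (continuous, semi-discrete, fully discrete) of the NLS solution construction, with $\mathbf{K}$ invertible, and let $\mathbf{\Pi}$ be a constant invertible $n\times n$ matrix with $\mathbf{J}\mathbf{\Pi}=-\mathbf{\Pi}\mathbf{J}$. Define $\mathbf{S}'=-\mathbf{\Pi}\mathbf{S}\mathbf{\Pi}^{-1}$ in the continuous case and $\mathbf{S}'=\mathbf{\Pi}\mathbf{S}^{-1}\mathbf{\Pi}^{-1}$ in the discrete cases, and $\mathbf{U}'=-\mathbf{U}\mathbf{K}^{-1}\mathbf{\Pi}^{-1}$, $\mathbf{V}'=\mathbf{\Pi}\mathbf{K}^{-1}\mathbf{V}$, $\mathbf{K}'=\mathbf{\Pi}\mathbf{K}^{-1}\mathbf{\Pi}^{-1}$. Then $(\mathbf{J},\mathbf{S}',\mathbf{U}',\mathbf{V}',\mathbf{K}')$ satisfy the same commutation relations and the same Sylvester equation as the original data, the associated matrix is $\mathbf{\Xi}'=\mathbf{\Pi}\mathbf{\Xi}^{-1}\mathbf{\Pi}^{-1}$, and the associated functions satisfy $\mathcal{U}'=\mathcal{U}$ and $\mathcal{D}'=\mathcal{D}+\mathbf{U}\mathbf{K}^{-1}\mathbf{V}$ (the latter summand being constant).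
   Context: Setting: $J\in\mathrm{Mat}(m,m,\mathbb{C})$ with $J^2=I_m$; constant complex $\mathbf{J},\mathbf{S},\mathbf{K}$ ($n\times n$), $\mathbf{U}$ ($m\times n$), $\mathbf{V}$ ($n\times m$) with $\mathbf{J}^2=\mathbf{I}$, $\mathbf{J}\mathbf{S}=\mathbf{S}\mathbf{J}$, $J\mathbf{U}=-\mathbf{U}\mathbf{J}$, $\mathbf{J}\mathbf{V}=\mathbf{V}J$, $\mathbf{J}\mathbf{K}=-\mathbf{K}\mathbf{J}$. Sylvester equation: $\mathbf{S}\mathbf{K}+\mathbf{K}\mathbf{S}=\mathbf{V}\mathbf{U}$ (continuous) or $\mathbf{S}^{-1}\mathbf{K}-\mathbf{K}\mathbf{S}=\mathbf{V}\mathbf{U}$ (discrete, $\mathbf{S}$ invertible). $\mathbf{\Xi}=e^{-x\mathbf{S}-\mathrm{i}t\mathbf{S}^2\mathbf{J}}$ (continuous), $\mathbf{\Xi}=\mathbf{S}^xe^{-\mathrm{i}t(\mathbf{S}+\mathbf{S}^{-1}-2\mathbf{I})\mathbf{J}}$ (semi-discrete), $\mathbf{\Xi}=\mathbf{S}^x[(\mathbf{I}+\mathrm{i}\mathbf{J}(\mathbf{I}-\mathbf{S}^{-1}))(\mathbf{I}-\mathrm{i}\mathbf{J}(\mathbf{I}-\mathbf{S}))^{-1}]^t$ (fully discrete). Associated functions: $\mathcal{U}=\mathbf{U}(\mathbf{\Xi}^{-1}-\mathbf{K}\mathbf{\Xi}\mathbf{K})^{-1}\mathbf{V}$, $\mathcal{D}=\mathbf{U}\mathbf{\Xi}\mathbf{K}(\mathbf{\Xi}^{-1}-\mathbf{K}\mathbf{\Xi}\mathbf{K})^{-1}\mathbf{V}$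 (assumed to exist); primed quantities are built the same way from primed data. *)

From HB Require Import structures.
From mathcomp Require Import all_boot all_order all_algebra.
Set Implicit Arguments. Unset Strict Implicit. Unset Printing Implicit Defensive.
Import Order.TTheory GRing.Theory Num.Theory.
Local Open Scope ring_scope.

(* The complex field is modelled as a Cauchy-complete archimedean
   numeric closed field (this characterizes C up to isomorphism). *)

Definition cvgC (C : numClosedFieldType) (u : nat -> C) (l : C) : Prop :=
  forall e : C, 0 < e -> exists N : nat, forall k : nat, (N <= k)%N -> `|u k - l| < e.

Definition cauchyC (C : numClosedFieldType) (u : nat -> C) : Prop :=
  forall e : C, 0 < e -> exists N : nat, forall k l : nat,
    (N <= k)%N -> (N <= l)%N -> `|u k - u l| < e.

Definition completeC (C : numClosedFieldType) : Prop :=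
  forall u : nat -> C, cauchyC u -> exists l, cvgC u l.

Definition mxexp_is (C : numClosedFieldType) (n : nat) (A E : 'M[C]_n.+1) : Prop :=
  forall i j : 'I_n.+1,
    cvgC (fun k : nat => (\sum_(l < k) (l`!%:R)^-1 *: A ^+ l) i j) (E i j).

Inductive nls_case := Continuous | SemiDiscrete | FullyDiscrete.

Definition sylvester (C : numClosedFieldType) (c : nls_case) (m n : nat)
  (S K : 'M[C]_n.+1) (U : 'M[C]_(m, n.+1)) (V : 'M[C]_(n.+1, m)) : Prop :=
  match c with
  | Continuous => S * K + K * S = V *m U
  | _ => S^-1 * K - K * S = V *m U
  end.

Definition Xi_is (C : numClosedFieldType) (c : nls_case) (n : nat)
  (JJ S : 'M[C]_n.+1) (x t : C) (Xi : 'M[C]_n.+1) : Prop :=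
  match c with
  | Continuous =>
      x \is Num.real /\ t \is Num.real /\
      mxexp_is (- (x *: S) - ('i * t) *: (S * S * JJ)) Xi
  | SemiDiscrete =>
      t \is Num.real /\
      exists (k : int) (E : 'M[C]_n.+1), x = k%:~R /\
        mxexp_is (- ('i * t) *: ((S + S^-1 - 2%:R) * JJ)) E /\
        Xi = S ^ k * E
  | FullyDiscrete =>
      exists k l : int, x = k%:~R /\ t = l%:~R /\
        Xi = S ^ k * ((1 + 'i *: (JJ * (1 - S^-1))) * (1 - 'i *: (JJ * (1 - S)))^-1) ^ l
  end.

Definition Ufun (C : numClosedFieldType) (m n : nat) (U : 'M[C]_(m, n.+1))
  (V : 'M[C]_(n.+1, m)) (K Xi : 'M[C]_n.+1) : 'M[C]_m :=
  U *m (Xi^-1 - K * Xi * K)^-1 *m V.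

Definition Dfun (C : numClosedFieldType) (m n : nat) (U : 'M[C]_(m, n.+1))
  (V : 'M[C]_(n.+1, m)) (K Xi : 'M[C]_n.+1) : 'M[C]_m :=
  U *m (Xi * K * (Xi^-1 - K * Xi * K)^-1) *m V.

Definition S_prime (C : numClosedFieldType) (c : nls_case) (n : nat)
  (Pi S : 'M[C]_n.+1) : 'M[C]_n.+1 :=
  match c with
  | Continuous => - (Pi * S * Pi^-1)
  | _ => Pi * S^-1 * Pi^-1
  end.

(* Conjugation by Pi is a ring automorphism which, Pi anticommuting with JJ, maps JJ to -JJ;
   hence it preserves (anti)commutation with JJ, and all relations for the primed data
   reduce to short identities in the matrix ring, e.g.
     Xi'^-1 - K' Xi' K' = - Pi K^-1 (Xi^-1 - K Xi K) K^-1 Pi^-1,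
   which gives U' = U and D' = D + U K^-1 V.
   For Xi' we need exp (Pi B Pi^-1) = Pi (exp B) Pi^-1 and exp (-A) = (exp A)^-1. The latter
   is proved on truncated series: P_k(A) P_k(-A) - 1 involves only the powers A^s with
   s >= k, with coefficients bounded by 2^s / s!, so it tends to 0. In the discrete cases
   S commutes with the exponential (resp. the Cayley factor), which lets us reorder
   Xi^-1 = (S^k E)^-1 into (S^-1)^k E^-1. *)

From HB Require Import structures.
From mathcomp Require Import all_boot all_order all_algebra.
Set Implicit Arguments. Unset Strict Implicit. Unset Printing Implicit Defensive.
Import Order.TTheory GRing.Theory Num.Theory.
Local Open Scope ring_scope.

Section Conjugation.
Variables (F : nzRingType) (R : unitAlgType F).
Implicit Types x y z j : R.

Definition conjr p x : R := p * x * p^-1.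

Definition anticomm x y := x * y = - (y * x).

Lemma commrZ x y (a : F) : GRing.comm x y -> GRing.comm x (a *: y).
Proof. by move=> xy; rewrite /GRing.comm -scalerAl -scalerAr xy. Qed.

Lemma anticommrV x y : y \is a GRing.unit -> anticomm x y -> anticomm x y^-1.
Proof.
move=> yU xy; apply: (mulIr yU).
by rewrite divrK // mulNr -mulrA xy mulrN opprK mulKr.
Qed.

Lemma anticommM_comm x y z : anticomm x y -> anticomm x z -> GRing.comm x (y * z).
Proof.
by move=> xy xz; rewrite /GRing.comm mulrA xy mulNr -[y * x * z]mulrA xz mulrN opprK mulrA.
Qed.

Variable p : R.
Hypothesis p_unit : p \is a GRing.unit.

Lemma conjrM x y : conjr p (x * y) = conjr p x * conjr p y.
Proof. by rewrite /conjr !mulrA divrK. Qed.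

Lemma conjrD x y : conjr p (x + y) = conjr p x + conjr p y.
Proof. by rewrite /conjr mulrDr mulrDl. Qed.

Lemma conjr0 : conjr p 0 = 0.
Proof. by rewrite /conjr mulr0 mul0r. Qed.

Lemma conjrN x : conjr p (- x) = - conjr p x.
Proof. by rewrite /conjr mulrN mulNr. Qed.

Lemma conjrB x y : conjr p (x - y) = conjr p x - conjr p y.
Proof. by rewrite conjrD conjrN. Qed.

Lemma conjr1 : conjr p 1 = 1.
Proof. by rewrite /conjr mulr1 divrr. Qed.

Lemma conjr_nat k : conjr p k%:R = k%:R.
Proof. by rewrite /conjr (commr_nat p) mulrK. Qed.

Lemma conjrZ a x : conjr p (a *: x) = a *: conjr p x.
Proof. by rewrite /conjr -scalerAr -scalerAl. Qed.

Lemma conjr_sum (I : Type) (r : seq I) (P : pred I) (f : I -> R) :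
  conjr p (\sum_(i <- r | P i) f i) = \sum_(i <- r | P i) conjr p (f i).
Proof. exact: (big_morph _ conjrD conjr0). Qed.

Lemma conjr_unit x : (conjr p x \is a GRing.unit) = (x \is a GRing.unit).
Proof. by rewrite /conjr unitrMl ?unitrV // unitrMr. Qed.

Lemma conjrV x : conjr p x^-1 = (conjr p x)^-1.
Proof.
have [xU | xNU] := boolP (x \is a GRing.unit); last first.
  by rewrite !invr_out ?conjr_unit.
by apply: (mulrI (x := conjr p x)); rewrite ?conjr_unit // -conjrM !divrr ?conjr_unit ?conjr1.
Qed.

Lemma conjrXn x k : conjr p (x ^+ k) = conjr p x ^+ k.
Proof. by elim: k => [|k IH]; rewrite ?expr0 ?conjr1 // !exprS conjrM IH. Qed.

Lemma conjrXz x (k : int) : conjr p (x ^ k) = conjr p x ^ k.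
Proof.
by case: k => k; rewrite ?NegzE -?invr_expz -!exprnP ?conjrV conjrXn.
Qed.

Lemma conjr_anticomm j : anticomm j p -> conjr p j = - j.
Proof. by move=> jp; rewrite /conjr -[p * j]opprK -jp mulNr mulrK. Qed.

Lemma comm_conjr j x : anticomm j p -> GRing.comm j x -> GRing.comm j (conjr p x).
Proof.
move=> jp jx; rewrite /GRing.comm -[j]opprK -(conjr_anticomm jp).
by rewrite mulNr mulrN -!conjrM jx.
Qed.

Lemma anticomm_conjr j x : anticomm j p -> anticomm j x -> anticomm j (conjr p x).
Proof.
move=> jp jx; rewrite /anticomm -[j]opprK -(conjr_anticomm jp).
by rewrite mulNr mulrN -!conjrM jx conjrN.
Qed.

End Conjugation.

Section MatrixNorm.
Variable C : numFieldType.

Definition mxnorm p q (A : 'M[C]_(p, q)) : C := \sum_i \sum_j `|A i j|.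

Section Rectangular.
Variables p q : nat.
Implicit Types A B : 'M[C]_(p, q).

Lemma mxnorm_ge0 A : 0 <= mxnorm A.
Proof. by apply: sumr_ge0 => i _; apply: sumr_ge0. Qed.

Lemma mxnorm_row A i : \sum_j `|A i j| <= mxnorm A.
Proof.
by rewrite /mxnorm (bigD1 i) //= lerDl; apply: sumr_ge0 => k _; apply: sumr_ge0.
Qed.

Lemma mxnorm_entry A i j : `|A i j| <= mxnorm A.
Proof.
by apply: le_trans (mxnorm_row A i); rewrite (bigD1 j) //= lerDl sumr_ge0.
Qed.

Lemma mxnorm_eq0 A : mxnorm A = 0 -> A = 0.
Proof.
move=> A0; apply/matrixP => i j; rewrite mxE; apply/normr0_eq0.
by apply/eqP; rewrite eq_le normr_ge0 -A0 mxnorm_entry.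
Qed.

Lemma mxnorm0 : mxnorm (0 : 'M[C]_(p, q)) = 0.
Proof. by rewrite /mxnorm big1 // => i _; rewrite big1 // => j _; rewrite mxE normr0. Qed.

Lemma mxnormD A B : mxnorm (A + B) <= mxnorm A + mxnorm B.
Proof.
rewrite /mxnorm -big_split ler_sum // => i _.
by rewrite -big_split ler_sum // => j _; rewrite mxE ler_normD.
Qed.

Lemma mxnormN A : mxnorm (- A) = mxnorm A.
Proof. by apply: eq_bigr => i _; apply: eq_bigr => j _; rewrite mxE normrN. Qed.

Lemma mxnormZ a A : mxnorm (a *: A) = `|a| * mxnorm A.
Proof.
rewrite /mxnorm mulr_sumr; apply: eq_bigr => i _.
by rewrite mulr_sumr; apply: eq_bigr => j _; rewrite mxE normrM.
Qed.

Lemma mxnorm_sum (I : Type) (r : seq I) (F : I -> 'M[C]_(p, q)) :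
  mxnorm (\sum_(i <- r) F i) <= \sum_(i <- r) mxnorm (F i).
Proof.
elim/big_rec2: _ => [|i y1 y2 _ le_y]; first by rewrite mxnorm0.
by apply: le_trans (mxnormD _ _) _; rewrite lerD2l.
Qed.

End Rectangular.

Lemma mxnormM p q r (A : 'M[C]_(p, q)) (B : 'M[C]_(q, r)) :
  mxnorm (A *m B) <= mxnorm A * mxnorm B.
Proof.
rewrite /mxnorm mulr_suml ler_sum // => i _.
apply: (@le_trans _ _ (\sum_j \sum_k `|A i k| * `|B k j|)).
  apply: ler_sum => j _; rewrite mxE; apply: le_trans (ler_norm_sum _ _ _) _.
  by apply: ler_sum => k _; rewrite normrM.
rewrite exchange_big mulr_suml ler_sum //= => k _.
by rewrite -mulr_sumr ler_wpM2l // mxnorm_row.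
Qed.

Lemma mxnormXn n (A : 'M[C]_n.+1) k : mxnorm (A ^+ k) <= mxnorm (1 : 'M_n.+1) * mxnorm A ^+ k.
Proof.
elim: k => [|k IH]; first by rewrite !expr0 mulr1.
rewrite !exprSr mulrA; apply: le_trans (mxnormM _ _) _.
by rewrite ler_wpM2r ?mxnorm_ge0.
Qed.

End MatrixNorm.

Section Vanishing.
Variable C : archiNumFieldType.
Implicit Types u v w : nat -> C.

Definition vanishing u := forall e : C, 0 < e -> exists N, forall k, (N <= k)%N -> u k <= e.

Lemma vanishing_le u w :
  (exists N, forall k, (N <= k)%N -> w k <= u k) -> vanishing u -> vanishing w.
Proof.
move=> [N0 wu] u0 e e_gt0; have [N uN] := u0 e e_gt0.
exists (maxn N0 N) => k; rewrite geq_max => /andP[N0k Nk].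
exact: le_trans (wu _ N0k) (uN _ Nk).
Qed.

Lemma vanishingD u v : vanishing u -> vanishing v -> vanishing (fun k => u k + v k).
Proof.
move=> u0 v0 e e_gt0; have e2_gt0 : 0 < e / 2 by rewrite divr_gt0.
have [[N1 uN] [N2 vN]] := (u0 _ e2_gt0, v0 _ e2_gt0).
exists (maxn N1 N2) => k; rewrite geq_max => /andP[N1k N2k].
by rewrite [e]splitr lerD ?uN ?vN.
Qed.

Lemma vanishingZ c u : 0 <= c -> vanishing u -> vanishing (fun k => c * u k).
Proof.
move=> c_ge0 u0 e e_gt0; have c1_gt0 : 0 < c + 1 by rewrite ltr_wpDl.
have [N uN] := u0 (e / (c + 1)) (divr_gt0 e_gt0 c1_gt0).
exists N => k Nk; apply: le_trans (ler_wpM2l c_ge0 (uN k Nk)) _.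
by rewrite mulrA ler_pdivrMr // mulrDr mulr1 mulrC lerDl ltW.
Qed.

Lemma vanishing_sum (I : Type) (r : seq I) (F : I -> nat -> C) :
  (forall i, vanishing (F i)) -> vanishing (fun k => \sum_(i <- r) F i k).
Proof.
move=> F0; elim: r => [|i r IH].
  by move=> e e_gt0; exists 0%N => k _; rewrite big_nil ltW.
apply: vanishing_le (vanishingD (F0 i) IH).
by exists 0%N => k _; rewrite big_cons.
Qed.

Lemma vanishing_cst c : vanishing (fun=> c) -> c <= 0.
Proof.
move=> c0; apply/ler_addgt0Pr => e /c0[N cN].
by rewrite add0r (cN N).
Qed.

End Vanishing.

Section ExpTerms.
Variable C : archiNumFieldType.
Implicit Types b : C.

Definition expterm b s : C := b ^+ s / s`!%:R.

Lemma expterm_ge0 b s : 0 <= b -> 0 <= expterm b s.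
Proof. by move=> b_ge0; rewrite divr_ge0 ?exprn_ge0. Qed.

Lemma exptermS b s : expterm b s.+1 = expterm b s * (b / s.+1%:R).
Proof. by rewrite /expterm factS natrM invfM exprSr [s.+1%:R^-1 * _]mulrC mulrACA. Qed.

Lemma exptermD (x y : C) s :
  expterm (x + y) s = \sum_(j < s.+1) expterm x (s - j) * expterm y j.
Proof.
rewrite /expterm exprDn mulr_suml; apply: eq_bigr => j _.
have le_js : (j <= s)%N := leq_ord j.
have binomE : 'C(s, j)%:R / s`!%:R = ((s - j)`!%:R * j`!%:R)^-1 :> C.
  rewrite -(bin_fact le_js) !natrM invfM mulrA mulfV; last by rewrite pnatr_eq0 -lt0n bin_gt0.
  by rewrite mul1r [_ * _]mulrC.
by rewrite -mulr_natr -(mulrA _ _ (s`!%:R^-1)) binomE invfM mulrACA.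
Qed.

Lemma expterm_halving b : 0 <= b ->
  exists K0, forall s, (K0 <= s)%N -> 2 * expterm b s.+1 <= expterm b s.
Proof.
move=> b_ge0; exists (Num.bound (2 * b)) => s le_s.
rewrite exptermS mulrCA ler_piMr ?expterm_ge0 //.
rewrite mulrA ler_pdivrMr ?ltr0Sn // mul1r.
apply: le_trans (ltW (archi_boundP _)) _; first by rewrite mulr_ge0.
by rewrite ler_nat (leq_trans le_s).
Qed.

Section Tail.
Variables (b : C) (K0 : nat).
Hypothesis b_ge0 : 0 <= b.
Hypothesis halving : forall s, (K0 <= s)%N -> 2 * expterm b s.+1 <= expterm b s.

Lemma expterm_tail k L : (K0 <= k)%N -> \sum_(k <= s < L) expterm b s <= 2 * expterm b k.
Proof.
move=> le_k.
have tail_bound d :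
    \sum_(k <= s < k + d) expterm b s + 2 * expterm b (k + d) <= 2 * expterm b k.
  elim: d => [|d IH]; first by rewrite addn0 big_geq // add0r.
  apply: le_trans IH; rewrite addnS big_nat_recr ?leq_addr //= -addrA lerD2l.
  apply: le_trans (lerD (lexx _) (halving (leq_trans le_k (leq_addr _ _)))) _.
  by rewrite mulr_natl mulr2n.
have [le_Lk | lt_kL] := leqP L k; first by rewrite big_geq // mulr_ge0 ?expterm_ge0.
rewrite -(subnKC (ltnW lt_kL)); apply: le_trans (tail_bound (L - k)%N).
by rewrite lerDl mulr_ge0 ?expterm_ge0.
Qed.

Lemma expterm_decay m : expterm b (K0 + m) * m.+1%:R <= expterm b K0.
Proof.
have geom : expterm b (K0 + m) * 2 ^+ m <= expterm b K0.
  elim: m => [|m IH]; first by rewrite addn0 expr0 mulr1.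
  apply: le_trans IH; rewrite exprS mulrA addnS ler_wpM2r ?exprn_ge0 //.
  by rewrite mulrC halving ?leq_addr.
apply: le_trans geom; rewrite ler_wpM2l ?expterm_ge0 //.
by rewrite -natrX ler_nat ltn_expl.
Qed.

End Tail.

Lemma vanishing_expterm b : 0 <= b -> vanishing (expterm b).
Proof.
move=> b_ge0; have [K0 halving] := expterm_halving b_ge0.
move=> e e_gt0; have q_ge0 : 0 <= expterm b K0 / e by rewrite divr_ge0 ?expterm_ge0 // ltW.
exists (K0 + Num.bound (expterm b K0 / e))%N => k le_k.
have le_K0k : (K0 <= k)%N := leq_trans (leq_addr _ _) le_k.
have := expterm_decay b_ge0 halving (k - K0); rewrite subnKC // => decay.
have lt_bound : expterm b K0 < (k - K0).+1%:R * e.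
  rewrite -ltr_pdivrMr //; apply: lt_le_trans (archi_boundP q_ge0) _.
  by rewrite ler_nat ltnW // ltnS leq_subRL.
have := le_lt_trans decay lt_bound.
by rewrite [_ * e]mulrC ltr_pM2r ?ltr0Sn //; apply: ltW.
Qed.

Lemma expterm_sum_bounded b : 0 <= b ->
  exists B, forall k, \sum_(s < k) expterm b s <= B.
Proof.
move=> b_ge0; have [K0 halving] := expterm_halving b_ge0.
exists (\sum_(s < K0) expterm b s + 2 * expterm b K0) => k.
rewrite -!(big_mkord xpredT).
apply: (@le_trans _ _ (\sum_(0 <= s < maxn k K0) expterm b s)).
  rewrite (@big_cat_nat _ _ _ k 0 (maxn k K0)) ?leq_maxl //= lerDl.
  by apply: sumr_ge0 => s _; apply: expterm_ge0.
rewrite (@big_cat_nat _ _ _ K0) ?leq_maxr //= lerD2l.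
exact: (expterm_tail b_ge0 halving _ (leqnn K0)).
Qed.

End ExpTerms.

Section MatrixExponential.
Variables (C : archiClosedFieldType) (n : nat).
Local Notation M := 'M[C]_n.+1.
Implicit Types A B X : M.

Definition mxexp_sum A k : M := \sum_(l < k) (l`!%:R)^-1 *: A ^+ l.

Lemma mxexp_isE A X : mxexp_is A X <-> vanishing (fun k => mxnorm (mxexp_sum A k - X)).
Proof.
split=> [AX | AX i j e e_gt0].
  apply: vanishing_sum => i; apply: vanishing_sum => j e e_gt0.
  have [N AN] := AX i j e e_gt0; exists N => k /AN.
  by rewrite !mxE => /ltW.
have [N AN] := AX (e / 2) (divr_gt0 e_gt0 (ltr0Sn _ 1)); exists N => k /AN le_e2.
have := mxnorm_entry (mxexp_sum A k - X) i j; rewrite !mxE => le_norm.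
apply: le_lt_trans le_norm (le_lt_trans le_e2 _).
by rewrite ltr_pdivrMr ?ltr0Sn // ltr_pMr // ltr1n.
Qed.

Lemma mxnorm_mxexp_sum A k :
  mxnorm (mxexp_sum A k) <= mxnorm (1 : M) * \sum_(l < k) expterm (mxnorm A) l.
Proof.
apply: le_trans (mxnorm_sum _ _) _; rewrite mulr_sumr ler_sum // => l _.
rewrite mxnormZ ger0_norm ?invr_ge0 ?ler0n // /expterm mulrC mulrA.
by rewrite ler_wpM2r ?invr_ge0 ?ler0n ?mxnormXn.
Qed.

Definition exp_trunc (a : C) k : {poly C} := \poly_(i < k) expterm a i.

Lemma mxexp_sum_horner a A k : mxexp_sum (a *: A) k = horner_mx A (exp_trunc a k).
Proof.
rewrite /exp_trunc poly_def linear_sum; apply: eq_bigr => i _ /=.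
by rewrite linearZ /= rmorphXn /= horner_mx_X exprZn scalerA mulrC.
Qed.

Lemma mxnorm_horner A (r : {poly C}) :
  mxnorm (horner_mx A r) <= \sum_(s < size r) `|r`_s| * (mxnorm (1 : M) * mxnorm A ^+ s).
Proof.
rewrite -{1}(coefK r) poly_def linear_sum /=.
apply: le_trans (mxnorm_sum _ _) _; apply: ler_sum => s _.
by rewrite linearZ /= rmorphXn /= horner_mx_X mxnormZ ler_wpM2l ?mxnormXn.
Qed.

Lemma coef_exp_truncM a c k s : (s < k)%N ->
  (exp_trunc a k * exp_trunc c k)`_s = expterm (c + a) s.
Proof.
move=> lt_sk; rewrite coefM exptermD; apply: eq_bigr => j _.
rewrite !coef_poly mulrC !(leq_ltn_trans _ lt_sk) ?leq_subr //.
by rewrite -ltnS ltn_ord.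
Qed.

Lemma norm_coef_exp_truncM a c k s :
  `|(exp_trunc a k * exp_trunc c k)`_s| <= expterm (`|c| + `|a|) s.
Proof.
have coef_le b i : `|(exp_trunc b k)`_i| <= expterm `|b| i.
  rewrite coef_poly; case: ifP => _; last by rewrite normr0 expterm_ge0.
  by rewrite /expterm normrM normfV normrX normr_nat.
rewrite coefM exptermD; apply: le_trans (ler_norm_sum _ _ _) _.
rewrite ler_sum // => j _; rewrite normrM mulrC.
by rewrite ler_pM ?normr_ge0 ?coef_le.
Qed.

Lemma norm_coef_exp_trunc_sub1 k s : (0 < k)%N ->
  `|(exp_trunc 1 k * exp_trunc (-1) k - 1)`_s| <= if (k <= s)%N then expterm 2 s else 0.
Proof.
move=> k_gt0; rewrite coefB coef1; have [le_ks | lt_sk] := leqP k s.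
  rewrite (gtn_eqF (leq_trans k_gt0 le_ks)) subr0.
  by apply: le_trans (norm_coef_exp_truncM _ _ _ _) _; rewrite normrN normr1.
rewrite coef_exp_truncM // addNr /expterm expr0n.
by case: s {lt_sk} => [|s]; rewrite /= ?fact0 ?divr1 ?mul0r subrr normr0.
Qed.

Lemma mxexp_sum_mulN A : exists K0, forall k, (K0 <= k)%N ->
  mxnorm (mxexp_sum A k * mxexp_sum (- A) k - 1)
    <= mxnorm (1 : M) * (2 * expterm (2 * mxnorm A) k).
Proof.
have a_ge0 : 0 <= 2 * mxnorm A by rewrite mulr_ge0 ?mxnorm_ge0.
have [K0 halving] := expterm_halving a_ge0.
exists K0.+1 => k lt_K0k; have k_gt0 : (0 < k)%N := leq_trans (ltn0Sn K0) lt_K0k.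
rewrite -[A in mxexp_sum A]scale1r -(scaleN1r A) !mxexp_sum_horner.
set r := exp_trunc 1 k * exp_trunc (-1) k - 1.
have -> : horner_mx A (exp_trunc 1 k) * horner_mx A (exp_trunc (-1) k) - 1 = horner_mx A r.
  by rewrite rmorphB rmorphM rmorph1.
apply: le_trans (mxnorm_horner _ _) _.
apply: (@le_trans _ _ (mxnorm (1 : M) * \sum_(k <= s < size r) expterm (2 * mxnorm A) s)).
  rewrite big_geq_mkord mulr_sumr [X in _ <= X]big_mkcond ler_sum //= => s _.
  apply: le_trans (ler_wpM2r _ (norm_coef_exp_trunc_sub1 s k_gt0)) _.
    by rewrite mulr_ge0 ?exprn_ge0 ?mxnorm_ge0.
  case: ifP => _; last by rewrite mul0r.
  by rewrite mulrCA /expterm exprMn mulrAC.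
by rewrite ler_wpM2l ?mxnorm_ge0 // (expterm_tail _ halving) // ltnW.
Qed.

Lemma mxexp_opp A X : X \is a GRing.unit -> mxexp_is A X -> mxexp_is (- A) X^-1.
Proof.
move=> X_unit /mxexp_isE AX; apply/mxexp_isE.
have [K0 prod_le] := mxexp_sum_mulN A.
have [B sum_le] := expterm_sum_bounded (mxnorm_ge0 (- A)).
have B_ge0 : 0 <= B by apply: le_trans (sum_le 0%N); rewrite big_ord0.
have [c1_ge0 cV_ge0] := (mxnorm_ge0 (1 : M), mxnorm_ge0 X^-1).
have a_ge0 : 0 <= 2 * mxnorm A by rewrite mulr_ge0 ?mxnorm_ge0.
apply: (vanishing_le _ (vanishingD
  (vanishingZ (mulr_ge0 cV_ge0 (mulr_ge0 c1_ge0 B_ge0)) AX)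
  (vanishingZ (mulr_ge0 cV_ge0 (mulr_ge0 c1_ge0 (ler0n _ 2))) (vanishing_expterm a_ge0)))).
exists K0 => k le_k; set P := mxexp_sum A k; set Q := mxexp_sum (- A) k.
have -> : Q - X^-1 = X^-1 * ((X - P) * Q + (P * Q - 1)).
  by rewrite mulrBl addrA subrK mulrBr mulKr // mulr1.
apply: le_trans (mxnormM _ _) _; rewrite -!mulrA -mulrDr ler_wpM2l //.
apply: le_trans (mxnormD _ _) _; apply: lerD; last exact: prod_le.
apply: le_trans (mxnormM _ _) _; rewrite -mxnormN opprB mulrC mulrA.
by rewrite ler_wpM2r ?mxnorm_ge0 // (le_trans (mxnorm_mxexp_sum _ _)) ?ler_wpM2l.
Qed.

Lemma mxexp_sum_conj A P k : P \is a GRing.unit ->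
  mxexp_sum (conjr P A) k = conjr P (mxexp_sum A k).
Proof.
by move=> P_unit; rewrite conjr_sum //; apply: eq_bigr => l _; rewrite conjrZ ?conjrXn.
Qed.

Lemma mxexp_conj A X P : P \is a GRing.unit ->
  mxexp_is A X -> mxexp_is (conjr P A) (conjr P X).
Proof.
move=> P_unit /mxexp_isE AX; apply/mxexp_isE.
apply: (vanishing_le _ (vanishingZ (mulr_ge0 (mxnorm_ge0 P) (mxnorm_ge0 P^-1)) AX)).
exists 0%N => k _; rewrite mxexp_sum_conj // -conjrB // /conjr mulrAC.
apply: le_trans (mxnormM _ _) _; rewrite ler_wpM2r ?mxnorm_ge0 //.
by apply: le_trans (mxnormM _ _) _; rewrite mulrC.
Qed.

Lemma mxexp_comm A X B : mxexp_is A X -> GRing.comm A B -> GRing.comm X B.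
Proof.
move=> /mxexp_isE AX AB; apply/eqP; rewrite -subr_eq0; apply/eqP/mxnorm_eq0.
apply/eqP; rewrite eq_le mxnorm_ge0 andbT; apply: vanishing_cst.
have cB_ge0 : 0 <= mxnorm B + mxnorm B by rewrite addr_ge0 ?mxnorm_ge0.
apply: (vanishing_le _ (vanishingZ cB_ge0 AX)); exists 0%N => k _.
set P := mxexp_sum A k.
have PB : GRing.comm P B.
  rewrite /GRing.comm /P mulr_suml mulr_sumr; apply: eq_bigr => l _.
  by rewrite -scalerAl -scalerAr (commrX l (commr_sym AB)).
have -> : X * B - B * X = (X - P) * B - B * (X - P).
  by rewrite mulrBl mulrBr PB opprB addrA subrK addrC.
apply: le_trans (mxnormD _ _) _; rewrite mxnormN [X in _ <= X]mulrDl.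
by apply: lerD; apply: le_trans (mxnormM _ _) _;
  rewrite ?[_ * mxnorm B]mulrC -[mxnorm (X - P)]mxnormN opprB.
Qed.

End MatrixExponential.

Section Transformation.
Variables (C : archiClosedFieldType) (m n : nat).
Local Notation M := 'M[C]_n.+1.
Variables (J : 'M[C]_m) (JJ S K Pi : M) (U : 'M[C]_(m, n.+1)) (V : 'M[C]_(n.+1, m)).
Hypotheses (K_unit : K \is a GRing.unit) (Pi_unit : Pi \is a GRing.unit).
Hypotheses (JJ_S : GRing.comm JJ S) (JJ_K : anticomm JJ K) (JJ_Pi : anticomm JJ Pi).

Local Notation U' := (- (U *m (K^-1 * Pi^-1))).
Local Notation V' := ((Pi * K^-1) *m V).
Local Notation K' := (conjr Pi K^-1).

Lemma S_prime_comm c : GRing.comm JJ (S_prime c Pi S).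
Proof.
case: c; rewrite /S_prime; [apply: commrN | |].
all: apply: (comm_conjr Pi_unit JJ_Pi) => //; exact: commrV.
Qed.

Lemma U_prime_anticomm : J *m U = - (U *m JJ) -> J *m U' = - (U' *m JJ).
Proof.
move=> J_U; have JJ_W : GRing.comm JJ (K^-1 * Pi^-1).
  by apply: anticommM_comm; apply: anticommrV.
rewrite !(mulmxN, mulNmx) mulmxA J_U mulNmx !opprK -mulmxA -[U *m _ *m JJ]mulmxA.
by congr (U *m _).
Qed.

Lemma V_prime_anticomm : JJ *m V = V *m J -> JJ *m V' = V' *m J.
Proof.
move=> JJ_V; have JJ_W : GRing.comm JJ (Pi * K^-1).
  by apply: anticommM_comm => //; apply: anticommrV.
by rewrite mulmxA mulmxE JJ_W -mulmxE -!mulmxA JJ_V.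
Qed.

Lemma K_prime_anticomm : anticomm JJ K'.
Proof. by apply: anticomm_conjr => //; apply: anticommrV. Qed.

Lemma V_prime_mul_U_prime : V' *m U' = - conjr Pi (K^-1 * (V *m U) * K^-1).
Proof. by rewrite mulmxN -!mulmxA (mulmxA V U) !mulmxE /conjr !mulrA. Qed.

Lemma sylvester_prime c : sylvester c S K U V -> sylvester c (S_prime c Pi S) K' U' V'.
Proof.
have sandwich X Y : K^-1 * (X * K + K * Y) * K^-1 = K^-1 * X + Y * K^-1.
  by rewrite mulrDr mulrDl !mulrA mulrK // mulVr // mul1r.
case: c => /= sylv; rewrite V_prime_mul_U_prime -sylv.
  rewrite sandwich -[Pi * S / Pi]/(conjr Pi S) mulNr mulrN -!conjrM //.
  by rewrite -opprD -conjrD // addrC.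
all: rewrite -[- (K * S)]mulrN sandwich -[Pi / S / Pi]/(conjr Pi S^-1) -conjrV // invrK.
all: by rewrite -!conjrM // -conjrB // mulNr -conjrN // opprB addrC.
Qed.

Section Resolvent.
Variable Xi : M.
Local Notation R := (Xi^-1 - K * Xi * K).
Hypothesis R_unit : R \is a GRing.unit.

Lemma resolvent_prime :
  ((conjr Pi Xi^-1)^-1 - K' * conjr Pi Xi^-1 * K')^-1 = - conjr Pi (K * R^-1 * K).
Proof.
have KV_unit : K^-1 \is a GRing.unit by rewrite unitrV.
have KR_unit : K^-1 * R \is a GRing.unit by rewrite unitrMr.
have -> : (conjr Pi Xi^-1)^-1 - K' * conjr Pi Xi^-1 * K' = conjr Pi (- (K^-1 * R * K^-1)).
  rewrite -conjrV // invrK -!conjrM // -conjrB //; congr (conjr Pi _).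
  by rewrite mulrBr mulrBl opprB !mulrA mulVr // mul1r mulrK.
rewrite -conjrV // invrN (invrM KR_unit KV_unit) (invrM KV_unit R_unit).
by rewrite !invrK mulrA conjrN.
Qed.

Lemma mulmx_sandwich (A B D : M) :
  (- (U *m A)) *m B *m (D *m V) = U *m (- (A * B * D)) *m V.
Proof. by rewrite !(mulNmx, mulmxN) -!mulmxE !mulmxA. Qed.

Lemma Ufun_prime : Ufun U' V' K' (conjr Pi Xi^-1) = Ufun U V K Xi.
Proof.
rewrite /Ufun resolvent_prime mulmx_sandwich; congr (_ *m _ *m _).
by rewrite mulrN mulNr opprK /conjr !mulrA !divrK // mulVr // mul1r mulrK.
Qed.

Lemma Dfun_prime : Dfun U' V' K' (conjr Pi Xi^-1) = Dfun U V K Xi + U *m K^-1 *m V.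
Proof.
rewrite /Dfun resolvent_prime mulmx_sandwich -mulmxDl -mulmxDr; congr (_ *m _ *m _).
rewrite !(mulrN, mulNr) opprK -!conjrM // /conjr !mulrA !divrK // mulrK //.
rewrite -[X in _ = _ + X](mulrK R_unit) -mulrDl; congr (_ * _).
by rewrite mulrBr !mulrA mulVr // mul1r addrC subrK.
Qed.

End Resolvent.

End Transformation.

Section XiTransformation.
Variables (C : archiClosedFieldType) (n : nat).
Local Notation M := 'M[C]_n.+1.
Variables (JJ S Pi : M) (x t : C) (Xi : M).
Hypotheses (Pi_unit : Pi \is a GRing.unit) (Xi_unit : Xi \is a GRing.unit).
Hypotheses (JJ_S : GRing.comm JJ S) (JJ_Pi : anticomm JJ Pi).

Lemma conjr_mulJJ Y : conjr Pi Y * JJ = - conjr Pi (Y * JJ).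
Proof. by rewrite conjrM // (conjr_anticomm Pi_unit JJ_Pi) mulrN opprK. Qed.

Lemma Xi_is_prime_continuous : Xi_is Continuous JJ S x t Xi ->
  Xi_is Continuous JJ (S_prime Continuous Pi S) x t (conjr Pi Xi^-1).
Proof.
move=> [x_real [t_real expA]]; do 2!split=> //.
have := mxexp_conj Pi_unit (mxexp_opp Xi_unit expA); congr (mxexp_is _ _).
rewrite /S_prime -[Pi * S / Pi]/(conjr Pi S) mulrNN -conjrM // conjr_mulJJ.
by rewrite opprB opprK conjrD !conjrZ !scalerN !opprK addrC.
Qed.

Lemma Xi_is_prime_semidiscrete : S \is a GRing.unit ->
  Xi_is SemiDiscrete JJ S x t Xi ->
  Xi_is SemiDiscrete JJ (S_prime SemiDiscrete Pi S) x t (conjr Pi Xi^-1).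
Proof.
move=> S_unit [t_real [k [E [-> [expB XiE]]]]]; split=> //.
exists k, (conjr Pi E^-1); split=> //.
have E_unit : E \is a GRing.unit by rewrite -(unitrMr _ (unitrXz k S_unit)) -XiE.
set B := - _ *: _ in expB.
have S_B : GRing.comm S B.
  apply/commrZ/commrM; last exact/commr_sym.
  by apply: commrB (commr_nat _ _); apply: commrD (commrV _); apply: commr_refl.
have E_S : GRing.comm E S := mxexp_comm expB (commr_sym S_B).
rewrite /S_prime -[Pi / S / Pi]/(conjr Pi S^-1); split.
  have := mxexp_conj Pi_unit (mxexp_opp E_unit expB); congr (mxexp_is _ _).
  rewrite -conjrV // invrK -(conjr_nat Pi_unit 2) -conjrD -conjrB // conjr_mulJJ.
  by rewrite /B !scaleNr scalerN !opprK conjrZ [S^-1 + S]addrC.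
rewrite XiE (invrM (unitrXz k S_unit) E_unit) invr_expz -exprz_inv -conjrXz // -conjrM //.
congr (conjr Pi _); apply: commr_sym; apply: commrV.
by apply: commr_sym; apply: commrXz; apply: commrV.
Qed.

Lemma conjr_cayleyD a Y :
  1 + a *: (JJ * (1 - conjr Pi Y)) = conjr Pi (1 - a *: (JJ * (1 - Y))).
Proof.
rewrite conjrB conjr1 // conjrZ conjrM // conjrB conjr1 //.
by rewrite (conjr_anticomm Pi_unit JJ_Pi) mulNr scalerN opprK.
Qed.

Lemma conjr_cayleyB a Y :
  1 - a *: (JJ * (1 - conjr Pi Y)) = conjr Pi (1 + a *: (JJ * (1 - Y))).
Proof. by rewrite -scaleNr conjr_cayleyD scaleNr opprK. Qed.

Lemma Xi_is_prime_fullydiscrete : S \is a GRing.unit ->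
  (1 - 'i *: (JJ * (1 - S))) \is a GRing.unit ->
  Xi_is FullyDiscrete JJ S x t Xi ->
  Xi_is FullyDiscrete JJ (S_prime FullyDiscrete Pi S) x t (conjr Pi Xi^-1).
Proof.
move=> S_unit D_unit [k [l [-> [-> XiE]]]]; rewrite /Xi_is /S_prime.
exists k, l; split; [by [] | split; [by [] |]].
rewrite -[Pi / S / Pi]/(conjr Pi S^-1) -(conjrV Pi_unit S^-1) invrK.
rewrite (conjr_cayleyD 'i S) (conjr_cayleyB 'i S^-1).
set N := 1 + 'i *: (JJ * (1 - S^-1)) in XiE *.
set D := 1 - 'i *: (JJ * (1 - S)) in XiE D_unit *.
rewrite -(conjrV Pi_unit N) -(conjrM Pi_unit D); set T := N * D^-1 in XiE.
have Sk_unit : S ^ k \is a GRing.unit := unitrXz k S_unit.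
(* for l = 0 the numerator N need not be invertible *)
have [l0 | l_neq0] := eqVneq l 0.
  by rewrite XiE l0 !expr0z !mulr1 invr_expz -exprz_inv conjrXz.
have Tl_unit : T ^ l \is a GRing.unit by rewrite -(unitrMr _ Sk_unit) -XiE.
have T_unit : T \is a GRing.unit by rewrite -(unitr_n0expz _ l_neq0).
have DV_unit : D^-1 \is a GRing.unit by rewrite unitrV.
have N_unit : N \is a GRing.unit by rewrite -(unitrMl _ DV_unit).
have -> : D * N^-1 = T^-1 by rewrite (invrM N_unit DV_unit) invrK.
rewrite XiE (invrM Sk_unit Tl_unit) !invr_expz -!exprz_inv.
rewrite -(conjrXz Pi_unit S^-1 k) -(conjrXz Pi_unit T^-1 l) -(conjrM Pi_unit (S^-1 ^ k)).
have S_cayley a Y : GRing.comm S Y -> GRing.comm S (a *: (JJ * (1 - Y))).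
  by move=> S_Y; apply/commrZ/commrM; [exact/commr_sym | exact/commrB/S_Y/commr1].
have S_T : GRing.comm S T.
  apply: commrM; first exact/commrD/S_cayley/commrV/commr_refl/commr1.
  exact/commrV/commrB/S_cayley/commr_refl/commr1.
congr (conjr Pi _); apply: commr_sym; apply: commrXz; apply: commrV.
by apply: commr_sym; apply: commrXz; apply: commrV; apply: commr_sym.
Qed.

End XiTransformation.

Unset Implicit Arguments.

Theorem mainTheorem4 (C : archiClosedFieldType) (C_complete : completeC C)
  (c : nls_case) (m n : nat)
  (J : 'M[C]_m) (JJ S K Pi : 'M[C]_n.+1)
  (U : 'M[C]_(m, n.+1)) (V : 'M[C]_(n.+1, m)) (x t : C) (Xi : 'M[C]_n.+1) :
  J *m J = 1%:M ->
  JJ * JJ = 1 ->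
  JJ * S = S * JJ ->
  J *m U = - (U *m JJ) ->
  JJ *m V = V *m J ->
  JJ * K = - (K * JJ) ->
  (c <> Continuous -> S \is a GRing.unit) ->
  sylvester c S K U V ->
  K \is a GRing.unit ->
  Pi \is a GRing.unit ->
  JJ * Pi = - (Pi * JJ) ->
  (c = FullyDiscrete -> (1 - 'i *: (JJ * (1 - S))) \is a GRing.unit) ->
  Xi_is c JJ S x t Xi ->
  Xi \is a GRing.unit ->
  (Xi^-1 - K * Xi * K) \is a GRing.unit ->
  let S' := S_prime c Pi S in
  let U' := - (U *m (K^-1 * Pi^-1)) in
  let V' := (Pi * K^-1) *m V in
  let K' := Pi * K^-1 * Pi^-1 in
  let Xi' := Pi * Xi^-1 * Pi^-1 in
  (JJ * S' = S' * JJ /\ J *m U' = - (U' *m JJ) /\ JJ *m V' = V' *m J /\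
   JJ * K' = - (K' * JJ)) /\
  sylvester c S' K' U' V' /\
  Xi_is c JJ S' x t Xi' /\
  Ufun U' V' K' Xi' = Ufun U V K Xi /\
  Dfun U' V' K' Xi' = Dfun U V K Xi + U *m K^-1 *m V.
Proof.
move=> _ _ JJ_S J_U JJ_V JJ_K S_unit sylv K_unit Pi_unit JJ_Pi D_unit Xi_c Xi_unit R_unit.
move=> S' U' V' K' Xi'; split; [|split; [|split]].
- split; [|split; [|split]].
  + exact: S_prime_comm.
  + exact: U_prime_anticomm.
  + exact: V_prime_anticomm.
  + exact: K_prime_anticomm.
- exact: sylvester_prime.
- rewrite {}/S'; case: c S_unit D_unit Xi_c {sylv} => S_unit D_unit Xi_c.
  + exact: Xi_is_prime_continuous.
  + by apply: Xi_is_prime_semidiscrete => //; apply: S_unit.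
  + by apply: Xi_is_prime_fullydiscrete => //; [apply: S_unit | apply: D_unit].
- by split; [apply: Ufun_prime | apply: Dfun_prime].
Qed.
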